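(* Let $q\equiv 3\pmod 4$ be a prime power and let $A$ be a multiplicative subgroup of $\mathbb{F}_q^*$ with $|A|\ge q^{2/3}$. There is an absolute constant $C>0$ such that for all functions $f_1,f_2,f_3,f_4\colon\mathbb{F}_q^2\to[-1,1]$, \[|N(f_1,f_2,f_3,f_4)|\le\min_{1\le j\le 4}\|f_j\|_{\square(V_1\times V_2)}+C\,\frac{q^{1/8}}{|A|^{1/4}}.\]
   Context: Define $\sigma\colon\mathbb{F}_q\to\mathbb{R}$ by $\sigma(x)=q/|A|$ if $x\in A$ and $\sigma(x)=0$ otherwise. Writing points of $\mathbb{F}_q^2=V_1\times V_2$ ($V_1=V_2=\mathbb{F}_q$) as $(a,c)$, define \[N(f_1,f_2,f_3,f_4)=\frac{1}{q^4}\sum_{a,b,c,d\in\mathbb{F}_q}f_1(a,c)f_2(a,d)f_3(b,c)f_4(b,d)\sigma(a-b)\sigma(c-d),\] \[M(f_1,f_2,f_3,f_4)=\frac{1}{q^4}\sum_{a,b,c,d\in\mathbb{F}_q}f_1(a,c)f_2(a,d)f_3(b,c)f_4(b,d),\] and $\|f\|_{\square(V_1\times V_2)}=M(f,f,f,f)^{1/4}$ for $f\colon\mathbb{F}_q^2\to[-1,1]$. *)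

From HB Require Import structures.
From mathcomp Require Import all_boot all_order all_algebra all_fingroup.
From mathcomp Require Import reals exp Rstruct.
Set Implicit Arguments. Unset Strict Implicit. Unset Printing Implicit Defensive.
Import Order.TTheory GRing.Theory Num.Theory.
Local Open Scope ring_scope.

Notation RR := Rdefinitions.R.

Section Defs.
Variables (F : finFieldType) (A : {group {unit F}}).

Definition Aset : {set F} := [set FinRing.uval u | u in A].

Definition qq : nat := #|F|.

Definition sigma (x : F) : RR :=
  if x \in Aset then (qq%:R / (#|A|)%:R) else 0.

Definition Nform (f1 f2 f3 f4 : F * F -> RR) : RR :=
  (qq%:R ^+ 4)^-1 * \sum_(a : F) \sum_(b : F) \sum_(c : F) \sum_(d : F)
     f1 (a, c) * f2 (a, d) * f3 (b, c) * f4 (b, d) * sigma (a - b) * sigma (c - d).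

Definition Mform (f1 f2 f3 f4 : F * F -> RR) : RR :=
  (qq%:R ^+ 4)^-1 * \sum_(a : F) \sum_(b : F) \sum_(c : F) \sum_(d : F)
     f1 (a, c) * f2 (a, d) * f3 (b, c) * f4 (b, d).

Definition boxnorm (f : F * F -> RR) : RR := powR (Mform f f f f) (4%:R^-1).

End Defs.

From HB Require Import structures.
From mathcomp Require Import all_boot all_order all_algebra all_fingroup all_field.
From mathcomp Require Import reals exp Rstruct complex.
From mathcomp Require Import ring lra.
Set Implicit Arguments. Unset Strict Implicit. Unset Printing Implicit Defensive.
Import Order.TTheory GRing.Theory Num.Theory.
Local Open Scope ring_scope.

(* Write W = 1_A - |A|/q for the balanced indicator of A, so that
   sigma = 1 + (q/|A|) W and sigma(x) sigma(y) - 1 = (sigma(x) - 1) sigma(y)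
   + (sigma(y) - 1).  Since A is a multiplicative group, the Fourier transform
   of W is constant on the orbits of A acting by dilation, and Parseval gives
   |W^(xi)|^2 <= q.  Hence every form sum_{a,b} W(a - b) u(a) v(b) with
   |u|, |v| <= 1 is at most q^{3/2}, and |N - M| <= 2 sqrt q / |A|, which is at
   most 2 q^{1/8} / |A|^{1/4} as soon as |A| >= sqrt q.  Finally, by two
   applications of Cauchy-Schwarz (the Gowers-Cauchy-Schwarz inequality) |M| is
   at most the product of the four box norms, each of which is at most 1. *)

Lemma exists_root_of_unity_neq1 (C : numClosedFieldType) p : (1 < p)%N ->
  exists2 w : C, w ^+ p = 1 & w != 1.
Proof.
move=> p_gt1; pose cyc := \poly_(i < p) (1 : C).
have [w cyc_w] : exists w, root cyc w.
  by apply/closed_rootP; rewrite size_poly_eq ?oner_neq0 //; case: p p_gt1 {cyc} => [|[]].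
have sum_w0 : \sum_(i < p) w ^+ i = 0.
  by rewrite -[RHS](eqP cyc_w) horner_poly; apply: eq_bigr => i _; rewrite mul1r.
exists w.
  by apply/eqP; rewrite -subr_eq0 subrX1 sum_w0 mulr0.
apply: contra_eq_neq sum_w0 => ->.
by under eq_bigr do rewrite expr1n; rewrite sumr_const card_ord pnatr_eq0 -lt0n ltnW.
Qed.

Section FpFunctional.
Import VectorInternalTheory.

Lemma exists_Fp_functional (F : finFieldType) p : p \in [pchar F] ->
  exists phi : F -> 'F_p, {morph phi : x y / x + y} /\ exists y, phi y = 1.
Proof.
move=> pcharFp; pose V := pPrimeCharType pcharFp.
have v2r1 : v2r (1 : V) != 0.
  by apply: contra_neq (oner_neq0 V) => v2r1_0; apply: v2r_inj; rewrite v2r1_0 raddf0.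
have [i v2r1_i] : exists i, v2r (1 : V) 0 i != 0.
  apply/existsP; apply: contraNT v2r1; rewrite negb_exists => /forallP v2r1_0.
  by apply/eqP/rowP => j; rewrite mxE; apply/eqP/negPn/v2r1_0.
pose phi (x : V) := v2r x 0 i.
exists phi; split; first by move=> x y; rewrite /phi linearD mxE.
by exists ((phi 1)^-1 *: (1 : V)); rewrite /phi linearZ mxE mulVf.
Qed.

End FpFunctional.

Lemma exists_additive_character (F : finFieldType) (C : numClosedFieldType) :
  exists psi : F -> C, [/\ forall x y, psi (x + y) = psi x * psi y,
    forall x, psi (- x) = (psi x)^*, psi 0 = 1 & exists y, psi y != 1].
Proof.
have [p p_prime pcharFp] := finPcharP F.
have [w wp w_neq1] := exists_root_of_unity_neq1 C (prime_gt1 p_prime).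
have [phi [phiD [y phiy]]] := exists_Fp_functional pcharFp.
pose psi x : C := w ^+ phi x.
have psiD x x' : psi (x + x') = psi x * psi x'.
  have wp' : w ^+ (Zp_trunc (pdiv p)).+2 = 1 by rewrite Fp_cast.
  by rewrite /psi phiD /= expr_mod // exprD.
have psi0 : psi 0 = 1.
  have phi0 : phi 0 = 0 by apply: (@addrI _ (phi 0)); rewrite -phiD !addr0.
  by rewrite /psi phi0 expr0.
have norm_psi x : `|psi x| = 1.
  apply/eqP; rewrite -(pexpr_eq1 (n := p)) ?normr_ge0 ?prime_gt0 //.
  by rewrite -normrX /psi -exprM mulnC exprM wp expr1n normr1.
exists psi; split => // [x|].
  have psiNK : psi (- x) * psi x = 1 by rewrite -psiD addNr psi0.
  by rewrite -[RHS]mulr1 -psiNK mulrCA -normCKC norm_psi expr1n mulr1.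
by exists y; rewrite /psi phiy /= modn_small ?expr1 // prime_gt1.
Qed.

Definition balanced {F : finType} {R : unitRingType} (S : {set F}) (x : F) : R :=
  (x \in S)%:R - #|S|%:R / #|F|%:R.

Section AdditiveCharacter.
Variables (F : finFieldType) (C : numClosedFieldType) (psi : F -> C).
Hypothesis psiD : forall x y, psi (x + y) = psi x * psi y.
Hypothesis psiN : forall x, psi (- x) = (psi x)^*.
Hypothesis psi0 : psi 0 = 1.
Hypothesis psi_nontrivial : exists y, psi y != 1.
Local Notation q := #|F|.

Lemma sum_char_mul t : \sum_z psi (z * t) = (t == 0)%:R * q%:R.
Proof.
have [-> | t0] := eqVneq t 0.
  by under eq_bigr do rewrite mulr0 psi0; rewrite sumr_const mul1r.
have [y psiy] := psi_nontrivial.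
set S := \sum_z _.
have S_inv : S = psi y * S.
  rewrite /S mulr_sumr (reindex_inj (addIr (t^-1 * y))) /=.
  by apply: eq_bigr => z _; rewrite mulrDl mulrAC mulVf // mul1r psiD mulrC.
have /eqP : (1 - psi y) * S = 0 by rewrite mulrBl mul1r -S_inv subrr.
by rewrite mulf_eq0 subr_eq0 eq_sym (negbTE psiy) /= mul0r => /eqP.
Qed.

Definition fourier (f : F -> C) xi := \sum_x f x * psi (xi * x).

Lemma sum_fourier_triple f g h :
  \sum_xi fourier f xi * fourier g (- xi) * fourier h xi =
  q%:R * \sum_a \sum_b f (a - b) * g a * h b.
Proof.
have expand xi : fourier f xi * fourier g (- xi) * fourier h xi =
    \sum_x \sum_a \sum_b f x * g a * h b * psi (xi * (x - a + b)).
  rewrite /fourier -mulrA mulr_suml; apply: eq_bigr => x _.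
  rewrite mulr_suml mulr_sumr; apply: eq_bigr => a _.
  rewrite !mulr_sumr; apply: eq_bigr => b _.
  by rewrite !mulrDr !psiD mulrN -mulNr; ring.
under eq_bigr do rewrite expand.
transitivity (\sum_x \sum_a \sum_b
    f x * g a * h b * ((x - a + b == 0)%:R * q%:R)).
  rewrite exchange_big; apply: eq_bigr => x _ /=.
  rewrite exchange_big; apply: eq_bigr => a _ /=.
  rewrite exchange_big; apply: eq_bigr => b _ /=.
  by rewrite -sum_char_mul mulr_sumr.
rewrite exchange_big mulr_sumr; apply: eq_bigr => a _ /=.
rewrite exchange_big mulr_sumr; apply: eq_bigr => b _ /=.
rewrite (bigD1 (a - b)) //= big1 => [|x neq_x].
  have -> : a - b - a + b = 0 by ring.
  by rewrite eqxx addr0 mul1r mulrC.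
suff /negbTE -> : x - a + b != 0 by rewrite mul0r mulr0.
apply: contra neq_x => /eqP x_ab.
have -> : x = x - a + b + (a - b) by ring.
by rewrite x_ab add0r.
Qed.

Lemma fourierN_real f xi : (forall x, f x \is Num.real) ->
  fourier f (- xi) = (fourier f xi)^*.
Proof.
move=> f_real; rewrite /fourier rmorph_sum; apply: eq_bigr => x _.
rewrite rmorphM -[RHS]/((f x)^* * (psi (xi * x))^*).
by rewrite conj_Creal // mulNr psiN.
Qed.

Lemma parseval u : (forall x, u x \is Num.real) ->
  \sum_xi `|fourier u xi| ^+ 2 = q%:R * \sum_a u a ^+ 2.
Proof.
move=> u_real; pose delta (x : F) : C := (x == 0)%:R.
have fourier_delta xi : fourier delta xi = 1.
  rewrite /fourier (bigD1 0) //= big1 => [|x /negbTE x0]; last by rewrite /delta x0 mul0r.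
  by rewrite mulr0 psi0 mulr1 addr0 /delta eqxx.
transitivity (\sum_xi fourier delta xi * fourier u (- xi) * fourier u xi).
  by apply: eq_bigr => xi _; rewrite fourier_delta mul1r fourierN_real // normCKC.
rewrite sum_fourier_triple; congr (_ * _); apply: eq_bigr => a _.
rewrite (bigD1 a) //= subrr /delta eqxx mul1r big1 ?addr0 // => b neq_ba.
by rewrite subr_eq0 eq_sym (negbTE neq_ba) !mul0r.
Qed.

Lemma conv_bilinear_le (w u v : F -> C) (s : C) :
  (forall x, u x \is Num.real) -> (forall x, v x \is Num.real) ->
  (forall xi, `|fourier w xi| <= s) ->
  `|\sum_a \sum_b w (a - b) * u a * v b| *+ 2 <=
    s * (\sum_a u a ^+ 2 + \sum_b v b ^+ 2).
Proof.
move=> u_real v_real w_le.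
have q_gt0 : 0 < q%:R :> C by rewrite ltr0n; apply/card_gt0P; exists 0.
rewrite -(ler_pM2l q_gt0) mulrnAr mulrCA mulrDr -!parseval //.
rewrite -[q%:R in X in X *+ 2](ger0_norm (ltW q_gt0)) -normrM -sum_fourier_triple.
rewrite [\sum_xi `|fourier u xi| ^+ 2](reindex_inj oppr_inj) -big_split /= mulr_sumr.
apply: (@le_trans _ _
  ((\sum_xi `|fourier w xi * fourier u (- xi) * fourier v xi|) *+ 2)).
  by rewrite lerMn2r ler_norm_sum orbT.
rewrite -sumrMnl; apply: ler_sum => xi _.
rewrite 2!normrM -mulrA -mulrnAr.
apply: ler_pM; rewrite ?normr_ge0 ?mulrn_wge0 ?mulr_ge0 ?normr_ge0 //.
by apply: real_leif_mean_square_scaled; rewrite normr_real.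
Qed.

Variable S : {set F}.
Hypothesis S1 : 1 \in S.
Hypothesis S0 : 0 \notin S.
Hypothesis mulS : {in S &, forall t x, t * x \in S}.
Hypothesis invS : {in S, forall t, t^-1 \in S}.
Local Notation W := (balanced S : F -> C).

Lemma sum_in_setE (g : F -> C) : \sum_x (x \in S)%:R * g x = \sum_(x in S) g x.
Proof.
by rewrite [RHS]big_mkcond; apply: eq_bigr => x _; case: (x \in S); rewrite ?mul1r ?mul0r.
Qed.

Lemma sum_in_set1 : \sum_x ((x \in S)%:R : C) = #|S|%:R.
Proof.
by rewrite -sum1_card natr_sum [RHS]big_mkcond; apply: eq_bigr => x _; case: (x \in S).
Qed.

Lemma fourier_balanced0 : fourier W 0 = 0.
Proof.
rewrite /fourier /balanced; under eq_bigr do rewrite mul0r psi0 mulr1.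
rewrite sumrB sum_in_set1 sumr_const -[X in _ - X]mulr_natr.
by rewrite divfK ?subrr // pnatr_eq0 -lt0n; apply/card_gt0P; exists 0.
Qed.

Lemma fourier_balancedE xi : xi != 0 -> fourier W xi = \sum_(x in S) psi (xi * x).
Proof.
move=> xi0; rewrite /fourier; under eq_bigr do rewrite mulrBl.
rewrite sumrB sum_in_setE -mulr_sumr.
under [\sum_x psi _]eq_bigr do rewrite mulrC.
by rewrite sum_char_mul (negbTE xi0) mul0r mulr0 subr0.
Qed.

Lemma fourier_balanced_dilate t xi : t \in S -> fourier W (t * xi) = fourier W xi.
Proof.
move=> tS; have [->|xi0] := eqVneq xi 0; first by rewrite mulr0.
have t0 : t != 0 by apply: contraNneq S0 => <-.
rewrite !fourier_balancedE ?mulf_neq0 // [RHS](reindex_inj (mulfI t0)) /=.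
apply: eq_big => [x|x _]; last by rewrite mulrCA mulrA.
apply/idP/idP => [xS|txS]; first exact: mulS.
by rewrite -(mulKf t0 x) mulS ?invS.
Qed.

Lemma sum_balanced_sqr_le : \sum_x W x ^+ 2 <= #|S|%:R.
Proof.
have q_gt0 : 0 < q%:R :> C by rewrite ltr0n; apply/card_gt0P; exists 0.
set al : C := #|S|%:R / q%:R.
have q_al : al *+ q = #|S|%:R by rewrite -[_ *+ q]mulr_natr /al divfK ?gt_eqF.
have W2E x : W x ^+ 2 = (x \in S)%:R * (1 - al *+ 2) + al ^+ 2.
  by rewrite /balanced -/al; case: (x \in S) => /=; ring.
under eq_bigr do rewrite W2E.
rewrite big_split /= sum_in_setE !sumr_const.
have -> : #|(xpredT : pred F)| = q by [].
rewrite expr2 -[al * al *+ _]mulrnAr q_al -[_ *+ #|S|]mulr_natr.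
have -> : (1 - al *+ 2) * #|S|%:R + al * #|S|%:R = #|S|%:R - al * #|S|%:R by ring.
by rewrite gerBl mulr_ge0 ?divr_ge0 ?ler0n.
Qed.

Lemma fourier_balanced_le (s : C) : 0 <= s -> s ^+ 2 = q%:R ->
  forall xi, `|fourier W xi| <= s.
Proof.
(* |S| |W^ xi|^2 = \sum_(t in S) |W^ (t xi)|^2 <= \sum_t |W^ t|^2 = q \sum_x W x^2 <= q |S| *)
move=> s_ge0 s2 xi; rewrite -ler_sqr ?nnegrE ?normr_ge0 // s2.
have [->|xi0] := eqVneq xi 0; first by rewrite fourier_balanced0 normr0 expr0n ler0n.
have n_gt0 : 0 < #|S|%:R :> C by rewrite ltr0n; apply/card_gt0P; exists 1.
rewrite -(ler_pM2l n_gt0).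
have -> : #|S|%:R * `|fourier W xi| ^+ 2 = \sum_(t in S) `|fourier W (t * xi)| ^+ 2.
  by under eq_bigr => t tS do rewrite fourier_balanced_dilate //; rewrite sumr_const mulr_natl.
apply: (@le_trans _ _ (\sum_t `|fourier W (t * xi)| ^+ 2)).
  by rewrite [X in _ <= X](bigID (mem S)) /= lerDl sumr_ge0 // => t _; rewrite exprn_ge0.
rewrite [X in X <= _](_ : _ = \sum_t `|fourier W t| ^+ 2); last first.
  by rewrite [RHS](reindex_inj (mulIf xi0)).
rewrite parseval; last first.
  by move=> x; rewrite rpredB ?rpredM ?rpredV ?realn.
by rewrite mulrC ler_pM2r ?ltr0n; [apply: sum_balanced_sqr_le | apply/card_gt0P; exists 0].
Qed.

End AdditiveCharacter.

Lemma normc_real_complex (R : rcfType) (x : R) : `|(x%:C)%C| = (`|x|%:C)%C.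
Proof. by rewrite normc_def /= expr0n /= addr0 sqrtr_sqr. Qed.

Section BalancedReal.
Variables (F : finFieldType) (S : {set F}).
Hypothesis S1 : 1 \in S.
Hypothesis S0 : 0 \notin S.
Hypothesis mulS : {in S &, forall t x, t * x \in S}.
Hypothesis invS : {in S, forall t, t^-1 \in S}.
Local Notation q := (#|F|%:R : RR).

Lemma balanced_bilinear_le (u v : F -> RR) :
  `|\sum_a \sum_b balanced S (a - b) * u a * v b| *+ 2 <=
    Num.sqrt q * (\sum_a u a ^+ 2 + \sum_b v b ^+ 2).
Proof.
have [psi [psiD psiN psi0 psi_nontrivial]] := exists_additive_character F RR[i].
pose s := (Num.sqrt q)%:C%C.
have s_ge0 : 0 <= s by rewrite ler0c sqrtr_ge0.
have s2 : s ^+ 2 = #|F|%:R by rewrite -rmorphXn sqr_sqrtr ?ler0n // rmorph_nat.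
have real_complex (g : F -> RR) x : (g x)%:C%C \is Num.real by rewrite complex_real.
have := conv_bilinear_le psiD psiN psi0 psi_nontrivial (real_complex u) (real_complex v)
  (fourier_balanced_le psiD psiN psi0 psi_nontrivial S1 S0 mulS invS s_ge0 s2).
have balancedC x : balanced S x = (balanced S x : RR)%:C%C.
  by rewrite /balanced rmorphB rmorph_nat fmorph_div !rmorph_nat.
rewrite (_ : \sum_a _ = (\sum_a \sum_b balanced S (a - b) * u a * v b)%:C%C); last first.
  rewrite rmorph_sum; apply: eq_bigr => a _; rewrite rmorph_sum; apply: eq_bigr => b _.
  by rewrite !rmorphM balancedC.
rewrite (_ : _ + _ = (\sum_a u a ^+ 2 + \sum_b v b ^+ 2)%:C%C); last first.
  by rewrite rmorphD !rmorph_sum; congr (_ + _); apply: eq_bigr => a _; rewrite rmorphXn.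
by rewrite normc_real_complex -rmorphMn -rmorphM lecR.
Qed.

Lemma sum_sqr_le_card (g : F -> RR) : (forall x, `|g x| <= 1) -> \sum_a g a ^+ 2 <= q.
Proof.
move=> g_le1; apply: (@le_trans _ _ (\sum_(a : F) 1)); last by rewrite sumr_const.
by apply: ler_sum => a _; rewrite -real_normK ?num_real // exprn_ile1.
Qed.

Lemma balanced_bilinear_bounded_le (u v : F -> RR) :
  (forall x, `|u x| <= 1) -> (forall x, `|v x| <= 1) ->
  `|\sum_a \sum_b balanced S (a - b) * u a * v b| <= Num.sqrt q * q.
Proof.
move=> u_le1 v_le1.
have sum_le : Num.sqrt q * (\sum_a u a ^+ 2 + \sum_b v b ^+ 2) <= (Num.sqrt q * q) *+ 2.
  by rewrite mulr2n -mulrDr ler_wpM2l ?sqrtr_ge0 // lerD ?sum_sqr_le_card.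
by have := le_trans (balanced_bilinear_le u v) sum_le; rewrite lerMn2r.
Qed.

End BalancedReal.

Lemma sqr_sum_mul_le (R : realFieldType) (I : finType) (x y : I -> R) :
  (\sum_i x i * y i) ^+ 2 <= (\sum_i x i ^+ 2) * (\sum_i y i ^+ 2).
Proof.
set X := \sum_i x i ^+ 2; set Y := \sum_i y i ^+ 2; set Z := \sum_i x i * y i.
have lagrange : \sum_i \sum_j (x i * y j - x j * y i) ^+ 2 = X * Y + Y * X - (Z * Z) *+ 2.
  rewrite !big_distrlr -sumrMnl -big_split -sumrB; apply: eq_bigr => i _.
  rewrite -sumrMnl -big_split -sumrB; apply: eq_bigr => j _ /=.
  ring.
have : 0 <= \sum_i \sum_j (x i * y j - x j * y i) ^+ 2.
  by apply: sumr_ge0 => i _; apply: sumr_ge0 => j _; apply: sqr_ge0.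
rewrite lagrange mulrC expr2; lra.
Qed.

Lemma sqr_sum2_mul_le (R : realFieldType) (I J : finType) (x y : I -> J -> R) :
  (\sum_i \sum_j x i j * y i j) ^+ 2 <=
    (\sum_i \sum_j x i j ^+ 2) * (\sum_i \sum_j y i j ^+ 2).
Proof. by rewrite !pair_bigA; apply: sqr_sum_mul_le. Qed.

Lemma exchange_big_pairs (R : nmodType) (I J : finType) (G : I -> I -> J -> J -> R) :
  \sum_i \sum_i' \sum_j \sum_j' G i i' j j' = \sum_j \sum_j' \sum_i \sum_i' G i i' j j'.
Proof.
under eq_bigr do rewrite exchange_big; under eq_bigr do under eq_bigr do rewrite exchange_big.
by rewrite exchange_big; under eq_bigr do rewrite exchange_big.
Qed.

Lemma prod4_le_min (R : realDomainType) (x1 x2 x3 x4 : R) :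
  0 <= x1 <= 1 -> 0 <= x2 <= 1 -> 0 <= x3 <= 1 -> 0 <= x4 <= 1 ->
  x1 * x2 * (x3 * x4) <= Num.min (Num.min x1 x2) (Num.min x3 x4).
Proof.
move=> /andP[x1_ge0 x1_le1] /andP[x2_ge0 x2_le1] /andP[x3_ge0 x3_le1] /andP[x4_ge0 x4_le1].
have x12_le1 : x1 * x2 <= 1 by rewrite mulr_ile1.
have x34_le1 : x3 * x4 <= 1 by rewrite mulr_ile1.
have x12_ge0 : 0 <= x1 * x2 by rewrite mulr_ge0.
have x34_ge0 : 0 <= x3 * x4 by rewrite mulr_ge0.
rewrite !le_min; apply/andP; split; apply/andP; split.
- exact: le_trans (ler_piMr x12_ge0 x34_le1) (ler_piMr x1_ge0 x2_le1).
- exact: le_trans (ler_piMr x12_ge0 x34_le1) (ler_piMl x2_ge0 x1_le1).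
- exact: le_trans (ler_piMl x34_ge0 x12_le1) (ler_piMr x3_ge0 x4_le1).
- exact: le_trans (ler_piMl x34_ge0 x12_le1) (ler_piMl x4_ge0 x3_le1).
Qed.

Section Forms.
Variable F : finFieldType.
Local Notation q := (#|F|%:R : RR).
Implicit Types f g : F * F -> RR.

Lemma card_gt0R : 0 < q.
Proof. by rewrite ltr0n; apply/card_gt0P; exists 0. Qed.

Definition wform (w w' : F -> RR) (f1 f2 f3 f4 : F * F -> RR) : RR :=
  (q ^+ 4)^-1 * \sum_a \sum_b \sum_c \sum_d
    f1 (a, c) * f2 (a, d) * f3 (b, c) * f4 (b, d) * w (a - b) * w' (c - d).

Definition transposed f : F * F -> RR := fun x => f (x.2, x.1).

Lemma Mform_wform (f1 f2 f3 f4 : F * F -> RR) :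
  Mform f1 f2 f3 f4 = wform (fun=> 1) (fun=> 1) f1 f2 f3 f4.
Proof.
congr (_ * _); do 4!(apply: eq_bigr => ? _); by rewrite !mulr1.
Qed.

Lemma wform_transpose (w w' : F -> RR) (f1 f2 f3 f4 : F * F -> RR) : wform w w' f1 f2 f3 f4 =
  wform w' w (transposed f1) (transposed f3) (transposed f2) (transposed f4).
Proof.
rewrite /wform exchange_big_pairs; congr (_ * _).
by do 4!(apply: eq_bigr => ? _); rewrite /transposed /=; ring.
Qed.

Lemma wform_sub (w1 w1' w2 w2' : F -> RR) (f1 f2 f3 f4 : F * F -> RR) :
  wform w1 w1' f1 f2 f3 f4 - wform w2 w2' f1 f2 f3 f4 =
  wform (fun x => w1 x - w2 x) w1' f1 f2 f3 f4 +
  wform w2 (fun x => w1' x - w2' x) f1 f2 f3 f4.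
Proof.
rewrite /wform -mulrBr -mulrDr; congr (_ * _).
rewrite -sumrB -big_split; apply: eq_bigr => a _ /=.
rewrite -sumrB -big_split; apply: eq_bigr => b _ /=.
rewrite -sumrB -big_split; apply: eq_bigr => c _ /=.
rewrite -sumrB -big_split; apply: eq_bigr => d _ /=.
ring.
Qed.

Lemma wform_colsE (w w' : F -> RR) (f1 f2 f3 f4 : F * F -> RR) : wform w w' f1 f2 f3 f4 =
  (q ^+ 4)^-1 * \sum_c \sum_d w' (c - d) *
    \sum_a \sum_b w (a - b) * (f1 (a, c) * f2 (a, d)) * (f3 (b, c) * f4 (b, d)).
Proof.
rewrite /wform exchange_big_pairs; congr (_ * _).
apply: eq_bigr => c _; apply: eq_bigr => d _; rewrite mulr_sumr.
by apply: eq_bigr => a _; rewrite mulr_sumr; apply: eq_bigr => b _; ring.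
Qed.

Lemma Mform_colsE (f1 f2 f3 f4 : F * F -> RR) : Mform f1 f2 f3 f4 =
  (q ^+ 4)^-1 * \sum_c \sum_d (\sum_a f1 (a, c) * f2 (a, d)) * (\sum_b f3 (b, c) * f4 (b, d)).
Proof.
rewrite /Mform exchange_big_pairs; congr (_ * _).
apply: eq_bigr => c _; apply: eq_bigr => d _; rewrite big_distrlr.
by apply: eq_bigr => a _; apply: eq_bigr => b _ /=; ring.
Qed.

Lemma Mform_transpose (f1 f2 f3 f4 : F * F -> RR) : Mform f1 f2 f3 f4 =
  Mform (transposed f1) (transposed f3) (transposed f2) (transposed f4).
Proof. by rewrite !Mform_wform wform_transpose. Qed.

Lemma Mform_pair_ge0 f g : 0 <= Mform f g f g.
Proof.
rewrite Mform_colsE mulr_ge0 ?invr_ge0 ?exprn_ge0 ?(ltW card_gt0R) //.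
by apply: sumr_ge0 => c _; apply: sumr_ge0 => d _; apply: sqr_ge0.
Qed.

Lemma Mform_sqr_le (f1 f2 f3 f4 : F * F -> RR) :
  Mform f1 f2 f3 f4 ^+ 2 <= Mform f1 f2 f1 f2 * Mform f3 f4 f3 f4.
Proof.
rewrite !Mform_colsE exprMn [X in _ <= X]mulrACA -expr2.
rewrite ler_wpM2l ?exprn_ge0 ?invr_ge0 ?exprn_ge0 ?(ltW card_gt0R) //.
exact: sqr_sum2_mul_le.
Qed.

Lemma Mform_pair_sqr_le f g : Mform f g f g ^+ 2 <= Mform f f f f * Mform g g g g.
Proof.
rewrite Mform_transpose; apply: le_trans (Mform_sqr_le _ _ _ _) _.
by rewrite [Mform (transposed f) _ _ _]Mform_transpose [Mform (transposed g) _ _ _]Mform_transpose.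
Qed.

Lemma Mform_pow4_le (f1 f2 f3 f4 : F * F -> RR) : Mform f1 f2 f3 f4 ^+ 4 <=
  Mform f1 f1 f1 f1 * Mform f2 f2 f2 f2 * (Mform f3 f3 f3 f3 * Mform f4 f4 f4 f4).
Proof.
rewrite (_ : 4 = 2 * 2)%N // exprM.
apply: (@le_trans _ _ ((Mform f1 f2 f1 f2 * Mform f3 f4 f3 f4) ^+ 2)).
  rewrite ler_sqr ?nnegrE ?sqr_ge0 ?Mform_sqr_le //.
  exact: mulr_ge0 (Mform_pair_ge0 _ _) (Mform_pair_ge0 _ _).
by rewrite exprMn ler_pM ?sqr_ge0 ?Mform_pair_sqr_le.
Qed.

Lemma boxnorm_ge0 f : 0 <= boxnorm f.
Proof. exact: powR_ge0. Qed.

Lemma boxnorm_pow4 f : boxnorm f ^+ 4 = Mform f f f f.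
Proof.
by rewrite -powR_mulrn ?powR_ge0 // -powRrM mulVf ?powRr1 ?Mform_pair_ge0 ?pnatr_eq0.
Qed.

Lemma gowers_cauchy_schwarz (f1 f2 f3 f4 : F * F -> RR) :
  `|Mform f1 f2 f3 f4| <= boxnorm f1 * boxnorm f2 * (boxnorm f3 * boxnorm f4).
Proof.
rewrite -(@ler_pXn2r _ 4) ?nnegrE ?mulr_ge0 ?normr_ge0 ?boxnorm_ge0 //.
rewrite !exprMn !boxnorm_pow4 (_ : 4 = 2 * 2)%N // exprM real_normK ?num_real //.
by rewrite -exprM Mform_pow4_le.
Qed.

Lemma Mform_le1 (f1 f2 f3 f4 : F * F -> RR) :
  (forall x, `|f1 x| <= 1) -> (forall x, `|f2 x| <= 1) ->
  (forall x, `|f3 x| <= 1) -> (forall x, `|f4 x| <= 1) ->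
  `|Mform f1 f2 f3 f4| <= 1.
Proof.
move=> f1_le1 f2_le1 f3_le1 f4_le1.
have q4_gt0 : 0 < q ^+ 4 by rewrite exprn_gt0 ?card_gt0R.
rewrite /Mform normrM [`|_^-1|]ger0_norm ?invr_ge0 ?(ltW q4_gt0) // ler_pdivrMl // mulr1.
have sum_le (G : F -> RR) (K : RR) :
    (forall x, `|G x| <= K) -> `|\sum_x G x| <= q * K.
  move=> G_le; apply: le_trans (ler_norm_sum _ _ _) _.
  by rewrite mulr_natl -sumr_const; apply: ler_sum.
rewrite (_ : q ^+ 4 = q * (q * (q * (q * 1)))); last by rewrite !exprS expr0.
apply: (sum_le) => a; apply: (sum_le) => b; apply: (sum_le) => c; apply: (sum_le) => d.
by rewrite !normrM !mulr_ile1 ?normr_ge0 ?mulr_ge0.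
Qed.

Lemma boxnorm_le1 f : (forall x, `|f x| <= 1) -> boxnorm f <= 1.
Proof.
move=> f_le1; rewrite -(@ler_pXn2r _ 4) ?nnegrE ?boxnorm_ge0 // expr1n boxnorm_pow4.
exact: le_trans (real_ler_norm (num_real _)) (Mform_le1 f_le1 f_le1 f_le1 f_le1).
Qed.

Lemma Mform_le_boxnorm (f1 f2 f3 f4 : F * F -> RR) :
  (forall x, `|f1 x| <= 1) -> (forall x, `|f2 x| <= 1) ->
  (forall x, `|f3 x| <= 1) -> (forall x, `|f4 x| <= 1) ->
  `|Mform f1 f2 f3 f4| <=
    Num.min (Num.min (boxnorm f1) (boxnorm f2)) (Num.min (boxnorm f3) (boxnorm f4)).
Proof.
move=> /boxnorm_le1 b1 /boxnorm_le1 b2 /boxnorm_le1 b3 /boxnorm_le1 b4.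
apply: le_trans (gowers_cauchy_schwarz f1 f2 f3 f4) _.
by rewrite prod4_le_min ?boxnorm_ge0.
Qed.

Lemma norm_wform_le (v w : F -> RR) (K : RR) (f1 f2 f3 f4 : F * F -> RR) :
  (forall u u' : F -> RR, (forall x, `|u x| <= 1) -> (forall x, `|u' x| <= 1) ->
     `|\sum_a \sum_b v (a - b) * u a * u' b| <= K) ->
  (forall x, 0 <= w x) -> \sum_c \sum_d w (c - d) = q ^+ 2 ->
  (forall x, `|f1 x| <= 1) -> (forall x, `|f2 x| <= 1) ->
  (forall x, `|f3 x| <= 1) -> (forall x, `|f4 x| <= 1) ->
  `|wform v w f1 f2 f3 f4| <= K / q ^+ 2.
Proof.
move=> v_le w_ge0 sum_w f1_le1 f2_le1 f3_le1 f4_le1.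
have q4_ge0 : 0 <= (q ^+ 4)^-1 by rewrite invr_ge0 exprn_ge0 ?(ltW card_gt0R).
apply: (@le_trans _ _ ((q ^+ 4)^-1 * \sum_c \sum_d w (c - d) * K)).
  rewrite wform_colsE normrM ger0_norm // ler_wpM2l //.
  apply: le_trans (ler_norm_sum _ _ _) _; apply: ler_sum => c _.
  apply: le_trans (ler_norm_sum _ _ _) _; apply: ler_sum => d _.
  rewrite normrM ger0_norm // ler_wpM2l //.
  apply: (v_le (fun a => f1 (a, c) * f2 (a, d)) (fun b => f3 (b, c) * f4 (b, d))) => x;
    by rewrite normrM mulr_ile1 ?normr_ge0 ?f1_le1 ?f2_le1 ?f3_le1 ?f4_le1.
under eq_bigr do rewrite -mulr_suml.
rewrite -mulr_suml sum_w.
suff -> : (q ^+ 4)^-1 * (q ^+ 2 * K) = K / q ^+ 2 by [].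
by field; rewrite lt0r_neq0 ?card_gt0R.
Qed.

End Forms.

Section SubgroupWeight.
Variables (F : finFieldType) (A : {group {unit F}}).
Local Notation q := (#|F|%:R : RR).
Local Notation n := (#|A|%:R : RR).

Lemma Aset1 : 1 \in Aset A.
Proof. by apply/imsetP; exists 1%g. Qed.

Lemma Aset_neq0 : 0 \notin Aset A.
Proof. by apply/imsetP => -[u _ u0]; have := valP u; rewrite /= -u0 unitr0. Qed.

Lemma AsetM : {in Aset A &, forall t x, t * x \in Aset A}.
Proof.
move=> _ _ /imsetP[t At ->] /imsetP[x Ax ->].
by apply/imsetP; exists (t * x)%g; rewrite ?groupM.
Qed.

Lemma AsetV : {in Aset A, forall t, t^-1 \in Aset A}.
Proof. by move=> _ /imsetP[t At ->]; apply/imsetP; exists t^-1%g; rewrite ?groupV. Qed.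

Lemma card_Aset : #|Aset A| = #|A|.
Proof. by rewrite card_imset //; apply: val_inj. Qed.

Lemma card_gt0A : 0 < n.
Proof. by rewrite ltr0n cardG_gt0. Qed.

Lemma sigma_ge0 x : 0 <= sigma A x.
Proof. by rewrite /sigma; case: ifP => // _; rewrite divr_ge0 ?ler0n. Qed.

Lemma sigma_sub1E x : sigma A x - 1 = q / n * balanced (Aset A) x.
Proof.
have n_neq0 := lt0r_neq0 card_gt0A.
have q_neq0 := lt0r_neq0 (card_gt0R F).
by rewrite /sigma /balanced /qq card_Aset; case: (x \in Aset A) => /=; field; apply/andP.
Qed.

Lemma sum_sigma_sub a : \sum_b sigma A (a - b) = q.
Proof.
rewrite (reindex_inj (inv_inj (subKr a))) /=; under eq_bigr do rewrite subKr.
rewrite /sigma -big_mkcond /= sumr_const card_Aset /qq.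
by rewrite -[_ / _ *+ _]mulr_natr divfK // lt0r_neq0 ?card_gt0A.
Qed.

Lemma sum2_sigma_sub : \sum_c \sum_d sigma A (c - d) = q ^+ 2.
Proof. by under eq_bigr do rewrite sum_sigma_sub; rewrite sumr_const -[q *+ _]mulr_natr expr2. Qed.

Lemma sigma_sub1_bilinear_le (u v : F -> RR) :
  (forall x, `|u x| <= 1) -> (forall x, `|v x| <= 1) ->
  `|\sum_a \sum_b (sigma A (a - b) - 1) * u a * v b| <= q / n * (Num.sqrt q * q).
Proof.
move=> u_le1 v_le1.
have qn_ge0 : 0 <= q / n by rewrite divr_ge0 ?ler0n.
rewrite (_ : \sum_a _ = q / n * \sum_a \sum_b balanced (Aset A) (a - b) * u a * v b).
  rewrite normrM ger0_norm // ler_wpM2l //.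
  exact: (balanced_bilinear_bounded_le Aset1 Aset_neq0 AsetM AsetV).
rewrite mulr_sumr; apply: eq_bigr => a _; rewrite mulr_sumr; apply: eq_bigr => b _.
by rewrite sigma_sub1E; ring.
Qed.

Lemma Nform_sub_Mform_le (f1 f2 f3 f4 : F * F -> RR) :
  (forall x, `|f1 x| <= 1) -> (forall x, `|f2 x| <= 1) ->
  (forall x, `|f3 x| <= 1) -> (forall x, `|f4 x| <= 1) ->
  `|Nform A f1 f2 f3 f4 - Mform f1 f2 f3 f4| <= (Num.sqrt q / n) *+ 2.
Proof.
(* The second term of wform_sub is the first one for the transposed functions. *)
move=> f1_le1 f2_le1 f3_le1 f4_le1.
have tr_le1 f : (forall x, `|f x| <= 1) -> forall x, `|transposed f x| <= 1.
  by move=> f_le1 x; apply: f_le1.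
have K_div : q / n * (Num.sqrt q * q) / q ^+ 2 = Num.sqrt q / n.
  by field; rewrite !lt0r_neq0 ?card_gt0A ?card_gt0R.
rewrite Mform_wform (_ : Nform A _ _ _ _ = wform (sigma A) (sigma A) f1 f2 f3 f4) //.
rewrite wform_sub [wform (fun=> 1) _ _ _ _ _]wform_transpose mulr2n.
apply: le_trans (ler_normD _ _) (lerD _ _); rewrite -K_div.
  apply: norm_wform_le; rewrite ?sum2_sigma_sub //; first exact: sigma_sub1_bilinear_le.
  exact: sigma_ge0.
apply: norm_wform_le; try exact: tr_le1.
- exact: sigma_sub1_bilinear_le.
- by move=> x; apply: ler01.
by under eq_bigr do rewrite sumr_const; rewrite sumr_const -[1 *+ _ *+ _]mulr_natr expr2.
Qed.

End SubgroupWeight.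

Lemma powR_inv_pow (x : RR) (k : nat) : 0 <= x -> (0 < k)%N -> (x `^ k%:R^-1) ^+ k = x.
Proof.
by move=> x_ge0 k_gt0; rewrite -powR_mulrn ?powR_ge0 // -powRrM mulVf ?powRr1 // pnatr_eq0 -lt0n.
Qed.

Lemma sqrt_div_le_powR (x n : RR) : 0 <= x -> 0 < n -> Num.sqrt x <= n ->
  Num.sqrt x / n <= x `^ 8%:R^-1 / n `^ 4%:R^-1.
Proof.
(* sqrt x / n = (b / a) ^+ 4 with 0 <= b / a <= 1. *)
move=> x_ge0 n_gt0 sqrt_le.
set b := x `^ 8%:R^-1; set a := n `^ 4%:R^-1.
have a_gt0 : 0 < a by apply: powR_gt0.
have b_ge0 : 0 <= b by apply: powR_ge0.
have sqrtE : Num.sqrt x = b ^+ 4.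
  by rewrite /b -powR_mulrn ?powR_ge0 // -powRrM -powR12_sqrt //; congr (_ `^ _); field.
have nE : n = a ^+ 4 by rewrite /a powR_inv_pow ?(ltW n_gt0).
have ba_ge0 : 0 <= b / a by rewrite divr_ge0 ?(ltW a_gt0).
have ba_le1 : b / a <= 1.
  rewrite ler_pdivrMr // mul1r -(@ler_pXn2r _ 4) ?nnegrE ?(ltW a_gt0) //.
  by rewrite -sqrtE -nE.
by rewrite sqrtE {1}nE -expr_div_n -[X in _ <= X]expr1 ler_wiXn2l.
Qed.

Lemma sqrt_le_powR (x r : RR) : 1 <= x -> 2%:R^-1 <= r -> Num.sqrt x <= x `^ r.
Proof. by move=> x_ge1 r_ge; rewrite -powR12_sqrt ?ler_powR // (le_trans ler01). Qed.

Theorem lemma3p4 :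
  exists C : RR, 0 < C /\
  forall (F : finFieldType) (A : {group {unit F}}),
    (#|F| %% 4 = 3)%N ->
    powR (#|F|%:R : RR) (2%:R / 3%:R) <= (#|A|)%:R ->
    forall f1 f2 f3 f4 : F * F -> RR,
      (forall x, -1 <= f1 x <= 1) -> (forall x, -1 <= f2 x <= 1) ->
      (forall x, -1 <= f3 x <= 1) -> (forall x, -1 <= f4 x <= 1) ->
      `|Nform A f1 f2 f3 f4| <=
        Num.min (Num.min (boxnorm f1) (boxnorm f2)) (Num.min (boxnorm f3) (boxnorm f4))
        + C * (powR (#|F|%:R : RR) (8%:R^-1) / powR (#|A|%:R : RR) (4%:R^-1)).
Proof.
exists 2; split => // F A _ A_ge f1 f2 f3 f4.
have le1 (f : F * F -> RR) : (forall x, -1 <= f x <= 1) -> forall x, `|f x| <= 1.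
  by move=> f_bd x; rewrite ler_norml f_bd.
move=> /le1 f1_le1 /le1 f2_le1 /le1 f3_le1 /le1 f4_le1.
set N := Nform A f1 f2 f3 f4; set M := Mform f1 f2 f3 f4.
have q_ge1 : 1 <= #|F|%:R :> RR by rewrite ler1n; apply/card_gt0P; exists 0.
have half_le : 2%:R^-1 <= 2%:R / 3%:R :> RR by lra.
have err_le := sqrt_div_le_powR (ler0n _ _) (card_gt0A A)
  (le_trans (sqrt_le_powR q_ge1 half_le) A_ge).
have NM_le := Nform_sub_Mform_le A f1_le1 f2_le1 f3_le1 f4_le1.
have M_le := Mform_le_boxnorm f1_le1 f2_le1 f3_le1 f4_le1.
apply: le_trans (_ : `|N| <= `|M| + `|N - M|) _; first by rewrite -{1}(subrK M N) addrC ler_normD.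
apply: lerD M_le _; rewrite mulr_natl; apply: le_trans NM_le _.
by rewrite lerMn2r err_le orbT.
Qed.
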